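(* Let $f,g\in H$ have a common fixed point $p\in\mathbb{P}^1$. Then every element of the second derived subgroup $\langle f,g\rangle''$ of the subgroup $\langle f,g\rangle<H$ generated by $f$ and $g$ acts trivially on some neighbourhood of $p$.
   Context: Let $\mathbb{P}^1=\mathbb{P}^1(\mathbb{R})$ with its usual topology (a circle) and the natural action of $\mathrm{PSL}_2(\mathbb{R})$. Let $G$ be the group of homeomorphisms of $\mathbb{P}^1$ which are piecewise in $\mathrm{PSL}_2(\mathbb{R})$ with finitely many pieces, each an interval of $\mathbb{P}^1$. Let $\infty\in\mathbb{P}^1$ be the point corresponding to the first basis vector of $\mathbb{R}^2$ and $H<G$ the stabilizer of $\infty$. For a group $J$, $J''$ denotes $[J',J']$ where $J'=[J,J]$. *)

From Stdlib Require Import Reals List.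
Open Scope R_scope.

(* P^1(R) = R ∪ {∞}: [Some t] is the line through (t,1), i.e. [t:1];
   [None] is ∞ = [1:0], the line of the first basis vector. *)
Definition P1 := option R.
Definition infty : P1 := None.

Definition P1_nbhd (p : P1) (U : P1 -> Prop) : Prop :=
  match p with
  | Some x => exists e, 0 < e /\ forall t, Rabs (t - x) < e -> U (Some t)
  | None => U None /\ exists M, forall t, M < Rabs t -> U (Some t)
  end.

Definition P1_continuous_at (f : P1 -> P1) (q : P1) : Prop :=
  forall V, P1_nbhd (f q) V -> P1_nbhd q (fun z => V (f z)).

(* Projective action of the matrix [[a, b], [c, d]] on [x:y] |-> [ax+by : cx+dy]. *)
Definition mobius (a b c d : R) (q : P1) : P1 :=
  match q with
  | Some t => if Req_EM_T (c * t + d) 0 then None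
              else Some ((a * t + b) / (c * t + d))
  | None => if Req_EM_T c 0 then None else Some (a / c)
  end.

Definition inverse_of {T : Type} (h h' : T -> T) : Prop :=
  (forall x, h (h' x) = x) /\ (forall x, h' (h x) = x).

(* Piecewise in PSL_2(R) with finitely many pieces (intervals): there is a
   finite set S of real breakpoints (∞ may always be added as a breakpoint)
   such that on each connected component of R \ S the map agrees with a
   single element of SL_2(R) (values at breakpoints are then forced by
   continuity). *)
Definition piecewise_projective (f : P1 -> P1) : Prop :=
  exists S : list R,
    forall x, ~ In x S ->
      exists a b c d, a * d - b * c = 1 /\
        forall y, (forall z, In z S -> ~ (Rmin x y <= z <= Rmax x y)) ->
          f (Some y) = mobius a b c d (Some y).

Definition in_G (f : P1 -> P1) : Prop :=
  exists f', inverse_of f f' /\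
    (forall q, P1_continuous_at f q) /\ (forall q, P1_continuous_at f' q) /\
    piecewise_projective f.

Definition in_H (f : P1 -> P1) : Prop := in_G f /\ f infty = infty.

Inductive gen {T : Type} (A : (T -> T) -> Prop) : (T -> T) -> Prop :=
  | gen_base h : A h -> gen A h
  | gen_id : gen A (fun x => x)
  | gen_comp h k : gen A h -> gen A k -> gen A (fun x => h (k x))
  | gen_inv h h' : gen A h -> inverse_of h h' -> gen A h'.

Definition commutators {T : Type} (K : (T -> T) -> Prop) (h : T -> T) : Prop :=
  exists x x' y y', K x /\ K y /\ inverse_of x x' /\ inverse_of y y' /\
    h = (fun z => x' (y' (x (y z)))).

Definition derived {T : Type} (K : (T -> T) -> Prop) := gen (commutators K).
Definition second_derived {T : Type} (K : (T -> T) -> Prop) := derived (derived K).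

From Stdlib Require Import Reals List Lra Psatz.
Open Scope R_scope.

(* In the coordinate u in which p = x0 + 1/u (or p = u when p is infinity), each side of p
   is a neighbourhood of +oo or -oo. An element of the stabiliser of p in G agrees there with
   a single projective piece, and continuity at the fixed point p forces that piece to fix p,
   i.e. to act as an affine map u -> a u + b with a > 0. Germs of such maps form a metabelian
   group: commutators are translations, and translations commute. *)

Definition chart (p : P1) (u : R) : P1 :=
  match p with None => Some u | Some x0 => Some (x0 + / u) end.

Definition affine_germ (p : P1) (h : P1 -> P1) (s M a b : R) : Prop :=
  forall u, M < s * u -> h (chart p u) = chart p (a * u + b).

Lemma Rabs_side_bound s b : (s = 1 \/ s = -1) -> - Rabs b <= s * b <= Rabs b.
Proof.
  intros [-> | ->]; split; pose proof (Rle_abs b); pose proof (Rle_abs (- b));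
    rewrite ?Rabs_Ropp in *; lra.
Qed.

Lemma affine_germ_comp p h k s M a b M' a' b' :
  (s = 1 \/ s = -1) -> 0 < a' -> affine_germ p h s M a b -> affine_germ p k s M' a' b' ->
  affine_germ p (fun z => h (k z)) s (Rmax M' ((Rabs M + Rabs b') / a'))
    (a * a') (a * b' + b).
Proof.
  intros Hs Ha Hh Hk u Hu.
  assert (HM' : M' < s * u) by (eapply Rle_lt_trans; [apply Rmax_l | exact Hu]).
  assert (HM : (Rabs M + Rabs b') / a' < s * u)
    by (eapply Rle_lt_trans; [apply Rmax_r | exact Hu]).
  assert (E : Rabs M + Rabs b' = a' * ((Rabs M + Rabs b') / a')) by (field; lra).
  pose proof (Rabs_side_bound s b' Hs). pose proof (Rle_abs M).
  rewrite (Hk u HM'), Hh.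
  - f_equal. ring.
  - replace (s * (a' * u + b')) with (a' * (s * u) + s * b') by ring. nra.
Qed.

Lemma affine_germ_inv p h h' s M a b :
  (s = 1 \/ s = -1) -> 0 < a -> inverse_of h h' -> affine_germ p h s M a b ->
  affine_germ p h' s (a * Rabs M + Rabs b) (/ a) (- b / a).
Proof.
  intros Hs Ha [_ Hhh'] Hh v Hv.
  assert (E : a * (s * ((v - b) / a)) = s * v - s * b) by (field; lra).
  pose proof (Rabs_side_bound s b Hs). pose proof (Rle_abs M).
  assert (Hu : M < s * ((v - b) / a)) by nra.
  pose proof (Hh _ Hu) as Hhu.
  replace (a * ((v - b) / a) + b) with v in Hhu by (field; lra).
  rewrite <- Hhu, Hhh'. f_equal. field. lra.
Qed.

Lemma inverse_of_fixed (x x' : P1 -> P1) p : inverse_of x x' -> x p = p -> x' p = p.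
Proof. intros [_ H] E. rewrite <- E at 1. apply H. Qed.

Lemma affine_germ_commutator p x x' y y' s M a b N a' b' :
  (s = 1 \/ s = -1) -> 0 < a -> 0 < a' -> inverse_of x x' -> inverse_of y y' ->
  affine_germ p x s M a b -> affine_germ p y s N a' b' ->
  exists K, affine_germ p (fun z => x' (y' (x (y z)))) s K
    1 (((a - 1) * b' - (a' - 1) * b) / (a * a')).
Proof.
  intros Hs Ha Ha' Ix Iy Gx Gy.
  assert (Haa' : 0 < a * a') by nra.
  assert (Ha'' : 0 < / a' * (a * a')) by (apply Rmult_lt_0_compat; [apply Rinv_0_lt_compat |]; lra).
  pose proof (affine_germ_comp _ _ _ _ _ _ _ _ _ _ Hs Ha' Gx Gy) as Gxy.
  pose proof (affine_germ_comp _ _ _ _ _ _ _ _ _ _ Hs Haa'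
    (affine_germ_inv _ _ _ _ _ _ _ Hs Ha' Iy Gy) Gxy) as Gy'xy.
  pose proof (affine_germ_comp _ _ _ _ _ _ _ _ _ _ Hs Ha''
    (affine_germ_inv _ _ _ _ _ _ _ Hs Ha Ix Gx) Gy'xy) as G.
  eexists.
  replace 1 with (/ a * (/ a' * (a * a'))) at 1 by (field; lra).
  replace (((a - 1) * b' - (a' - 1) * b) / (a * a'))
    with (/ a * (/ a' * (a * b' + b) + - b' / a') + - b / a) by (field; lra).
  exact G.
Qed.

Record affine_subgroup (S : R -> R -> Prop) : Prop := {
  slope_pos : forall a b, S a b -> 0 < a;
  id_mem : S 1 0;
  comp_mem : forall a b a' b', S a b -> S a' b' -> S (a * a') (a * b' + b);
  inv_mem : forall a b, S a b -> S (/ a) (- b / a) }.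

Definition affine_near (S : R -> R -> Prop) (p : P1) (h : P1 -> P1) : Prop :=
  h p = p /\ forall s, (s = 1 \/ s = -1) -> exists M a b, S a b /\ affine_germ p h s M a b.

Lemma gen_affine_near S p (A : (P1 -> P1) -> Prop) :
  affine_subgroup S -> (forall h, A h -> affine_near S p h) ->
  forall h, gen A h -> affine_near S p h.
Proof.
  intros HS HA h Hg.
  induction Hg as [h Hh | | h k _ [Fh IHh] _ [Fk IHk] | h h' _ [Fh IHh] Hinv].
  - auto.
  - split; [reflexivity |]. intros s Hs. exists 0, 1, 0. split; [apply (id_mem S HS) |].
    intros u _. f_equal. ring.
  - split; [rewrite Fk; exact Fh |]. intros s Hs.
    destruct (IHh s Hs) as [M [a [b [Sab Gh]]]].
    destruct (IHk s Hs) as [M' [a' [b' [Sab' Gk]]]].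
    exists (Rmax M' ((Rabs M + Rabs b') / a')), (a * a'), (a * b' + b).
    split; [exact (comp_mem S HS _ _ _ _ Sab Sab') |].
    apply affine_germ_comp; [exact Hs | eapply (slope_pos S HS); exact Sab' | exact Gh | exact Gk].
  - split; [exact (inverse_of_fixed _ _ _ Hinv Fh) |]. intros s Hs.
    destruct (IHh s Hs) as [M [a [b [Sab Gh]]]].
    exists (a * Rabs M + Rabs b), (/ a), (- b / a).
    split; [exact (inv_mem S HS _ _ Sab) |].
    apply (affine_germ_inv _ h); [exact Hs | eapply (slope_pos S HS); exact Sab | exact Hinv | exact Gh].
Qed.

Lemma commutators_affine_near (S T : R -> R -> Prop) p K :
  affine_subgroup S ->
  (forall a b a' b', S a b -> S a' b' -> T 1 (((a - 1) * b' - (a' - 1) * b) / (a * a'))) ->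
  (forall h, K h -> affine_near S p h) -> forall h, commutators K h -> affine_near T p h.
Proof.
  intros HS HST HK h [x [x' [y [y' [Kx [Ky [Ix [Iy ->]]]]]]]].
  destruct (HK x Kx) as [Fx Ax]. destruct (HK y Ky) as [Fy Ay].
  split.
  - rewrite Fy, Fx, (inverse_of_fixed _ _ _ Iy Fy), (inverse_of_fixed _ _ _ Ix Fx).
    reflexivity.
  - intros s Hs.
    destruct (Ax s Hs) as [M [a [b [Sab Gx]]]].
    destruct (Ay s Hs) as [N [a' [b' [Sab' Gy]]]].
    destruct (affine_germ_commutator _ _ _ _ _ _ _ _ _ _ _ _ Hs
      (slope_pos S HS _ _ Sab) (slope_pos S HS _ _ Sab') Ix Iy Gx Gy) as [K' G].
    exists K', 1, (((a - 1) * b' - (a' - 1) * b) / (a * a')). auto.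
Qed.

Lemma derived_affine_near (S T : R -> R -> Prop) p K :
  affine_subgroup S -> affine_subgroup T ->
  (forall a b a' b', S a b -> S a' b' -> T 1 (((a - 1) * b' - (a' - 1) * b) / (a * a'))) ->
  (forall h, K h -> affine_near S p h) -> forall h, derived K h -> affine_near T p h.
Proof.
  intros HS HT HST HK. apply gen_affine_near; [exact HT |].
  exact (commutators_affine_near S T p K HS HST HK).
Qed.

Definition positive_slope (a b : R) : Prop := 0 < a.
Definition translation (a b : R) : Prop := a = 1.
Definition identity_affine (a b : R) : Prop := a = 1 /\ b = 0.

Lemma positive_slope_subgroup : affine_subgroup positive_slope.
Proof.
  unfold positive_slope. split; intros; try lra.
  - apply Rmult_lt_0_compat; assumption.
  - apply Rinv_0_lt_compat; assumption.
Qed.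

Lemma translation_subgroup : affine_subgroup translation.
Proof.
  unfold translation. split; intros; subst; try lra; try ring; apply Rinv_1.
Qed.

Lemma identity_affine_subgroup : affine_subgroup identity_affine.
Proof.
  unfold identity_affine.
  split; intros; repeat match goal with H : _ /\ _ |- _ => destruct H end; subst;
    try split; try lra; try ring; try apply Rinv_1; field.
Qed.

Lemma P1_nbhd_chart p M (U : P1 -> Prop) :
  U p -> (forall u, M < Rabs u -> U (chart p u)) -> P1_nbhd p U.
Proof.
  intros Hp HU. destruct p as [x0 |]; simpl.
  - pose proof (Rle_abs M). pose proof (Rabs_pos M).
    exists (/ (Rabs M + 1)). split; [apply Rinv_0_lt_compat; lra |].
    intros t Ht. destruct (Req_EM_T t x0) as [-> | E]; [exact Hp |].
    assert (Pt : 0 < Rabs (t - x0)) by (apply Rabs_pos_lt; lra).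
    assert (Ht' : Rabs (t - x0) * (Rabs M + 1) < 1).
    { apply (Rmult_lt_compat_r (Rabs M + 1)) in Ht; [| lra].
      rewrite Rinv_l in Ht; lra. }
    replace t with (x0 + / / (t - x0)) by (rewrite Rinv_inv; ring).
    apply (HU (/ (t - x0))). rewrite Rabs_inv.
    apply (Rmult_lt_reg_r (Rabs (t - x0))); [exact Pt |].
    rewrite Rinv_l by lra. nra.
  - split; [exact Hp |]. exists M. exact HU.
Qed.

Lemma identity_affine_near_fixes p h :
  affine_near identity_affine p h -> exists U, P1_nbhd p U /\ forall q, U q -> h q = q.
Proof.
  intros [Hp Ah].
  destruct (Ah 1 (or_introl eq_refl)) as [M1 [a1 [b1 [[-> ->] G1]]]].
  destruct (Ah (-1) (or_intror eq_refl)) as [M2 [a2 [b2 [[-> ->] G2]]]].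
  exists (fun q => h q = q). split; [| auto].
  apply (P1_nbhd_chart p (Rabs M1 + Rabs M2)); [exact Hp |].
  intros u Hu. pose proof (Rle_abs M1). pose proof (Rle_abs M2).
  pose proof (Rabs_pos M1). pose proof (Rabs_pos M2).
  replace (chart p u) with (chart p (1 * u + 0)) at 2 by (f_equal; ring).
  destruct (Rcase_abs u) as [N | N];
    [rewrite (Rabs_left u N) in Hu; apply G2 | rewrite (Rabs_right u N) in Hu; apply G1];
    lra.
Qed.
Lemma Rabs_side s : (s = 1 \/ s = -1) -> Rabs s = 1.
Proof. intros [-> | ->]; [apply Rabs_R1 | rewrite Rabs_left; lra]. Qed.

Lemma list_separated (S : list R) (x0 : R) :
  exists e, 0 < e /\ forall z, In z S -> z <> x0 -> e <= Rabs (z - x0).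
Proof.
  induction S as [| z0 S [e [He H]]].
  - exists 1. split; [lra | intros z []].
  - destruct (Req_EM_T z0 x0) as [E | E].
    + exists e. split; [exact He |]. intros z [<- | Hz] Hzx; [congruence | auto].
    + assert (0 < Rabs (z0 - x0)) by (apply Rabs_pos_lt; lra).
      exists (Rmin e (Rabs (z0 - x0))). split; [apply Rmin_pos; lra |].
      intros z [<- | Hz] Hzx; [apply Rmin_r |].
      eapply Rle_trans; [apply Rmin_l | auto].
Qed.

Lemma list_bounded (S : list R) : exists X, forall z, In z S -> Rabs z < X.
Proof.
  induction S as [| z0 S [X H]].
  - exists 0. intros z [].
  - exists (Rmax X (Rabs z0 + 1)). intros z [<- | Hz].
    + eapply Rlt_le_trans; [| apply Rmax_r]. lra.
    + eapply Rlt_le_trans; [apply H; exact Hz | apply Rmax_l].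
Qed.

Lemma between_near_side s x0 e x y z : (s = 1 \/ s = -1) ->
  0 < s * (x - x0) < e -> 0 < s * (y - x0) < e -> Rmin x y <= z <= Rmax x y ->
  z <> x0 /\ Rabs (z - x0) < e.
Proof.
  intros Hs Hx Hy Hz. unfold Rmin, Rmax in Hz.
  destruct Hs as [-> | ->]; destruct (Rle_dec x y); (split; [lra | apply Rabs_def1; lra]).
Qed.

Lemma between_far_side s X x y z : (s = 1 \/ s = -1) ->
  X < s * x -> X < s * y -> Rmin x y <= z <= Rmax x y -> X < Rabs z.
Proof.
  intros Hs Hx Hy Hz. unfold Rmin, Rmax in Hz.
  pose proof (Rle_abs z). pose proof (Rle_abs (- z)) as Hz'. rewrite Rabs_Ropp in Hz'.
  destruct Hs as [-> | ->]; destruct (Rle_dec x y); lra.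
Qed.

Lemma piece_beside_point f x0 s : piecewise_projective f -> (s = 1 \/ s = -1) ->
  exists e a b c d, 0 < e /\ a * d - b * c = 1 /\
    forall y, 0 < s * (y - x0) < e -> f (Some y) = mobius a b c d (Some y).
Proof.
  intros [S HS] Hs.
  destruct (list_separated S x0) as [e [He HSe]].
  set (x := x0 + s * (e / 2)).
  assert (Hx : 0 < s * (x - x0) < e) by (unfold x; destruct Hs as [-> | ->]; lra).
  assert (HxS : ~ In x S).
  { intro Hin.
    destruct (between_near_side s x0 e x x x Hs Hx Hx) as [Hne Hlt];
      [unfold Rmin, Rmax; destruct (Rle_dec x x); lra |].
    pose proof (HSe x Hin Hne). lra. }
  destruct (HS x HxS) as [a [b [c [d [Hdet Hf]]]]].
  exists e, a, b, c, d. split; [exact He |]. split; [exact Hdet |].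
  intros y Hy. apply Hf. intros z Hz Hzb.
  destruct (between_near_side s x0 e x y z Hs Hx Hy Hzb) as [Hne Hlt].
  pose proof (HSe z Hz Hne). lra.
Qed.

Lemma piece_near_infinity f s : piecewise_projective f -> (s = 1 \/ s = -1) ->
  exists X a b c d, a * d - b * c = 1 /\
    forall y, X < s * y -> f (Some y) = mobius a b c d (Some y).
Proof.
  intros [S HS] Hs.
  destruct (list_bounded S) as [X HSX].
  set (x := s * (Rabs X + 1)).
  assert (Hx : Rabs X < s * x) by (unfold x; destruct Hs as [-> | ->]; lra).
  assert (HxS : ~ In x S).
  { intro Hin. pose proof (HSX x Hin). pose proof (Rle_abs X).
    unfold x in *. rewrite Rabs_mult, Rabs_side, Rabs_right in * by (auto; pose proof (Rabs_pos X); lra).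
    lra. }
  destruct (HS x HxS) as [a [b [c [d [Hdet Hf]]]]].
  exists (Rabs X), a, b, c, d. split; [exact Hdet |].
  intros y Hy. apply Hf. intros z Hz Hzb.
  pose proof (between_far_side s (Rabs X) x y z Hs Hx Hy Hzb). pose proof (HSX z Hz).
  pose proof (Rle_abs X). lra.
Qed.

Lemma exists_small_pos d e A B C : 0 < d -> 0 < e -> 0 <= A -> 0 < B -> 0 <= C ->
  exists eta, 0 < eta /\ eta < d /\ eta < e /\ eta * A < B /\ eta * C < 1.
Proof.
  intros Hd He HA HB HC.
  assert (Hr1 : 0 < B / (A + 1)) by (apply Rdiv_lt_0_compat; lra).
  assert (Hr2 : 0 < 1 / (C + 1)) by (apply Rdiv_lt_0_compat; lra).
  set (m := Rmin (Rmin d e) (Rmin (B / (A + 1)) (1 / (C + 1)))).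
  assert (Hm : 0 < m) by (unfold m; repeat apply Rmin_pos; lra).
  assert (m1 : m <= d) by (unfold m; eapply Rle_trans; [apply Rmin_l | apply Rmin_l]).
  assert (m2 : m <= e) by (unfold m; eapply Rle_trans; [apply Rmin_l | apply Rmin_r]).
  assert (m3 : m <= B / (A + 1)) by (unfold m; eapply Rle_trans; [apply Rmin_r | apply Rmin_l]).
  assert (m4 : m <= 1 / (C + 1)) by (unfold m; eapply Rle_trans; [apply Rmin_r | apply Rmin_r]).
  assert (E3 : B / (A + 1) * (A + 1) = B) by (field; lra).
  assert (E4 : 1 / (C + 1) * (C + 1) = 1) by (field; lra).
  exists (m / 2). repeat split; try lra; nra.
Qed.

(* If the piece did not fix x0, then f y - x0 = N(y) / D(y) with N(x0) <> 0, which stays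
   away from 0 as y -> x0, contradicting continuity of f at x0. *)
Lemma piece_fixes_point f x0 s e a b c d :
  P1_continuous_at f (Some x0) -> f (Some x0) = Some x0 -> (s = 1 \/ s = -1) -> 0 < e ->
  (forall y, 0 < s * (y - x0) < e -> f (Some y) = mobius a b c d (Some y)) ->
  a * x0 + b = x0 * (c * x0 + d).
Proof.
  intros Hc Hp Hs He Hf.
  set (D0 := c * x0 + d). set (N0 := a * x0 + b - x0 * D0).
  destruct (Req_EM_T N0 0) as [E | E]; [unfold N0 in E; lra | exfalso].
  assert (HN0 : 0 < Rabs N0) by (apply Rabs_pos_lt; exact E).
  set (K := Rabs D0 + 1).
  assert (HK : 0 < K) by (pose proof (Rabs_pos D0); unfold K; lra).
  set (eps := Rabs N0 / (2 * K)).
  assert (Heps : 0 < eps) by (unfold eps; apply Rdiv_lt_0_compat; lra).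
  assert (Heps2 : eps * (2 * K) = Rabs N0) by (unfold eps; field; lra).
  assert (Hnbhd : P1_nbhd (f (Some x0))
                    (fun z => exists t, z = Some t /\ Rabs (t - x0) < eps)).
  { rewrite Hp. exists eps. split; [exact Heps | eauto]. }
  destruct (Hc _ Hnbhd) as [del [Hdel Hnear]].
  destruct (exists_small_pos del e (2 * Rabs (a - c * x0)) (Rabs N0) (Rabs c))
    as [eta [Heta [Hetad [Hetae [HetaN Hetac]]]]];
    try (pose proof (Rabs_pos (a - c * x0)); pose proof (Rabs_pos c)); try lra.
  set (y := x0 + s * eta).
  assert (Hse : Rabs (s * eta) = eta) by (rewrite Rabs_mult, Rabs_side, Rabs_right; lra).
  assert (Hy : 0 < s * (y - x0) < e) by (unfold y; destruct Hs as [-> | ->]; lra).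
  assert (Hyd : Rabs (y - x0) < del) by (unfold y; replace (x0 + s * eta - x0) with (s * eta) by ring; lra).
  destruct (Hnear y Hyd) as [t [Ht Htx]].
  rewrite (Hf y Hy) in Ht. unfold mobius in Ht.
  destruct (Req_EM_T (c * y + d) 0) as [Ed | Ed]; [discriminate |].
  injection Ht as Ht.
  assert (PD : 0 < Rabs (c * y + d)) by (apply Rabs_pos_lt; exact Ed).
  assert (EN : N0 = (t - x0) * (c * y + d) - (a - c * x0) * (s * eta))
    by (rewrite <- Ht; unfold N0, D0, y; field; exact Ed).
  assert (T1 : Rabs N0 <= Rabs (t - x0) * Rabs (c * y + d) + Rabs (a - c * x0) * eta).
  { pose proof (Rabs_triang ((t - x0) * (c * y + d)) (- ((a - c * x0) * (s * eta)))) as Tr.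
    rewrite Rabs_Ropp, Rabs_mult, Rabs_mult, Hse in Tr. rewrite EN. exact Tr. }
  assert (T2 : Rabs (c * y + d) <= Rabs D0 + Rabs c * eta).
  { replace (c * y + d) with (D0 + c * (s * eta)) by (unfold D0, y; ring).
    eapply Rle_trans; [apply Rabs_triang | rewrite Rabs_mult, Hse; lra]. }
  assert (Q : Rabs (t - x0) * Rabs (c * y + d) < eps * K).
  { apply Rlt_le_trans with (eps * Rabs (c * y + d)).
    - apply Rmult_lt_compat_r; assumption.
    - apply Rmult_le_compat_l; [lra |]. unfold K. nra. }
  nra.
Qed.

Lemma fixing_matrix_det a b c d x0 :
  a * d - b * c = 1 -> a * x0 + b = x0 * (c * x0 + d) -> (a - c * x0) * (c * x0 + d) = 1.
Proof. intros Hdet Hfix. nra. Qed.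

Lemma mobius_fixing_point_chart a b c d x0 u :
  a * d - b * c = 1 -> a * x0 + b = x0 * (c * x0 + d) ->
  u <> 0 -> (c * x0 + d) * u + c <> 0 ->
  mobius a b c d (Some (x0 + / u)) =
  Some (x0 + / ((c * x0 + d) * (c * x0 + d) * u + c * (c * x0 + d))).
Proof.
  intros Hdet Hfix Hu Hden.
  pose proof (fixing_matrix_det a b c d x0 Hdet Hfix) as HD.
  set (D0 := c * x0 + d) in *.
  assert (HD0 : D0 <> 0) by (intro Z; rewrite Z in HD; lra).
  assert (Ha : a = c * x0 + / D0).
  { apply (Rmult_eq_reg_r D0); [| exact HD0]. rewrite Rmult_plus_distr_r, Rinv_l by exact HD0. lra. }
  assert (Hb : b = x0 * D0 - a * x0) by lra.
  simpl. destruct (Req_EM_T (c * (x0 + / u) + d) 0) as [E | E].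
  - exfalso. apply Hden. apply (Rmult_eq_reg_r (/ u)); [| apply Rinv_neq_0_compat; exact Hu].
    rewrite Rmult_0_l, <- E. unfold D0. field. exact Hu.
  - f_equal. rewrite Hb, Ha. unfold D0 in *. field.
    repeat split; try assumption; intro Z; apply Hden; nra.
Qed.

Lemma affine_germ_of_fixing_piece f x0 s e a b c d :
  (s = 1 \/ s = -1) -> 0 < e -> a * d - b * c = 1 -> a * x0 + b = x0 * (c * x0 + d) ->
  (forall y, 0 < s * (y - x0) < e -> f (Some y) = mobius a b c d (Some y)) ->
  exists M, affine_germ (Some x0) f s M
    ((c * x0 + d) * (c * x0 + d)) (c * (c * x0 + d)).
Proof.
  intros Hs He Hdet Hfix Hf.
  pose proof (fixing_matrix_det a b c d x0 Hdet Hfix) as HD.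
  assert (HD0 : c * x0 + d <> 0) by (intro Z; rewrite Z in HD; lra).
  exists (/ e + Rabs (c / (c * x0 + d))). intros u Hu. simpl.
  assert (Hie : 0 < / e) by (apply Rinv_0_lt_compat; lra).
  pose proof (Rabs_pos (c / (c * x0 + d))).
  assert (Hsu : / e < s * u) by lra.
  assert (Hu0 : u <> 0) by (intro Z; rewrite Z, Rmult_0_r in Hsu; lra).
  assert (Habs : Rabs u = s * u)
    by (destruct Hs as [-> | ->]; [rewrite Rabs_right | rewrite Rabs_left]; lra).
  assert (Hy : 0 < s * (x0 + / u - x0) < e).
  { replace (s * (x0 + / u - x0)) with (/ (s * u))
      by (destruct Hs as [-> | ->]; field; exact Hu0).
    split; [apply Rinv_0_lt_compat; lra |].
    rewrite <- (Rinv_inv e). apply Rinv_lt_contravar; [nra | exact Hsu]. }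
  rewrite (Hf _ Hy). apply mobius_fixing_point_chart; [exact Hdet | exact Hfix | exact Hu0 |].
  intro Z. assert (Eu : u = - (c / (c * x0 + d))).
  { apply (Rmult_eq_reg_l (c * x0 + d)); [| exact HD0].
    replace ((c * x0 + d) * - (c / (c * x0 + d))) with (- c) by (field; exact HD0). lra. }
  rewrite Eu, Rabs_Ropp in Habs. rewrite Eu in Hu. lra.
Qed.

Lemma mobius_far_value a b c d y :
  a * d - b * c = 1 -> c <> 0 -> 1 < Rabs (c * (c * y + d)) ->
  exists t, mobius a b c d (Some y) = Some t /\ Rabs t < Rabs (a / c) + 1.
Proof.
  intros Hdet Hc Hbig. simpl.
  destruct (Req_EM_T (c * y + d) 0) as [E | E].
  { rewrite E, Rmult_0_r, Rabs_R0 in Hbig. lra. }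
  eexists. split; [reflexivity |].
  assert (Hb : b = (a * d - 1) / c).
  { apply (Rmult_eq_reg_r c); [| exact Hc].
    replace ((a * d - 1) / c * c) with (a * d - 1) by (field; exact Hc). lra. }
  replace ((a * y + b) / (c * y + d)) with (a / c + - / (c * (c * y + d)))
    by (rewrite Hb; field; split; assumption).
  eapply Rle_lt_trans; [apply Rabs_triang |].
  rewrite Rabs_Ropp, Rabs_inv.
  assert (/ Rabs (c * (c * y + d)) < 1) by (rewrite <- Rinv_1; apply Rinv_1_lt_contravar; lra).
  lra.
Qed.

(* A piece u -> (a u + b) / (c u + d) with c <> 0 tends to a / c at infinity, whereas continuity
   of f at the fixed point infinity forces f to tend to infinity. *)
Lemma piece_at_infinity_affine f s X a b c d :
  P1_continuous_at f None -> f None = None -> (s = 1 \/ s = -1) -> a * d - b * c = 1 ->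
  (forall y, X < s * y -> f (Some y) = mobius a b c d (Some y)) -> c = 0.
Proof.
  intros Hcont Hp Hs Hdet Hf.
  destruct (Req_EM_T c 0) as [E | E]; [exact E | exfalso].
  assert (Hnbhd : P1_nbhd (f None)
            (fun z => z = None \/ exists t, z = Some t /\ Rabs (a / c) + 1 < Rabs t)).
  { rewrite Hp. split; [left; reflexivity |]. exists (Rabs (a / c) + 1). eauto. }
  destruct (Hcont _ Hnbhd) as [_ [M HM]].
  assert (Pc : 0 < Rabs c) by (apply Rabs_pos_lt; exact E).
  assert (Ec : Rabs c * / Rabs c = 1) by (field; lra).
  assert (Hq : 0 <= (Rabs d + / Rabs c) / Rabs c).
  { pose proof (Rabs_pos d). assert (0 < / Rabs c) by (apply Rinv_0_lt_compat; lra).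
    apply Rle_mult_inv_pos; lra. }
  set (Y := Rabs X + Rabs M + (Rabs d + / Rabs c) / Rabs c + 1).
  assert (HYXM : Rabs X + Rabs M + 1 <= Y) by (unfold Y; lra).
  pose proof (Rle_abs X). pose proof (Rle_abs M). pose proof (Rabs_pos X). pose proof (Rabs_pos M).
  assert (HY : Rabs d + / Rabs c < Rabs c * Y).
  { assert (Rabs c * ((Rabs d + / Rabs c) / Rabs c) = Rabs d + / Rabs c) by (field; lra).
    unfold Y. nra. }
  assert (HsY : Rabs (s * Y) = Y)
    by (rewrite Rabs_mult, Rabs_side, Rmult_1_l by exact Hs; apply Rabs_right; lra).
  assert (HX : X < s * (s * Y))
    by (replace (s * (s * Y)) with Y by (destruct Hs as [-> | ->]; ring); lra).
  assert (HM' : M < Rabs (s * Y)) by lra.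
  assert (Hbig : 1 < Rabs (c * (c * (s * Y) + d))).
  { pose proof (Rabs_triang_inv (c * (s * Y)) (- d)) as Tr.
    rewrite Rabs_Ropp, Rabs_mult, HsY in Tr.
    replace (c * (s * Y) - - d) with (c * (s * Y) + d) in Tr by ring.
    rewrite Rabs_mult. nra. }
  destruct (mobius_far_value a b c d (s * Y) Hdet E Hbig) as [t [Ht Hlt]].
  destruct (HM _ HM') as [Hn | [t' [Ht' Hlt']]]; rewrite (Hf _ HX), Ht in *;
    [discriminate | injection Ht' as <-; lra].
Qed.

Lemma stabiliser_affine_near f p : in_G f -> f p = p -> affine_near positive_slope p f.
Proof.
  intros [f' [_ [Hc [_ Hpw]]]] Hp. split; [exact Hp |]. intros s Hs.
  destruct p as [x0 |].
  - destruct (piece_beside_point f x0 s Hpw Hs) as [e [a [b [c [d [He [Hdet Hf]]]]]]].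
    pose proof (piece_fixes_point f x0 s e a b c d (Hc _) Hp Hs He Hf) as Hfix.
    destruct (affine_germ_of_fixing_piece f x0 s e a b c d Hs He Hdet Hfix Hf) as [M G].
    exists M, ((c * x0 + d) * (c * x0 + d)), (c * (c * x0 + d)). split; [| exact G].
    pose proof (fixing_matrix_det a b c d x0 Hdet Hfix) as HD.
    apply Rsqr_pos_lt. intro Z. rewrite Z in HD. lra.
  - destruct (piece_near_infinity f s Hpw Hs) as [X [a [b [c [d [Hdet Hf]]]]]].
    pose proof (piece_at_infinity_affine f s X a b c d (Hc _) Hp Hs Hdet Hf) as ->.
    assert (Had : a * d = 1) by lra.
    exists X, (a * a), (a * b). split.
    + apply Rsqr_pos_lt. intro Z. rewrite Z in Had. lra.
    + intros u Hu. simpl. rewrite (Hf u Hu). simpl.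
      destruct (Req_EM_T (0 * u + d) 0) as [Z | Z]; [exfalso; nra |].
      f_equal. apply (Rmult_eq_reg_r d); [| lra].
      transitivity ((a * u + b) * (a * d)); [rewrite Had; field; lra | ring].
Qed.

Theorem lemma1 (f g : P1 -> P1) (p : P1) :
  in_H f -> in_H g -> f p = p -> g p = p ->
  forall h, second_derived (gen (fun k => k = f \/ k = g)) h ->
  exists U, P1_nbhd p U /\ forall q, U q -> h q = q.
Proof.
  intros [Gf _] [Gg _] Fp Gp h Hh.
  apply identity_affine_near_fixes.
  revert h Hh. apply (derived_affine_near translation);
    [exact translation_subgroup | exact identity_affine_subgroup | |].
  { intros a b a' b' -> ->. split; [reflexivity | field]. }
  apply (derived_affine_near positive_slope);
    [exact positive_slope_subgroup | exact translation_subgroup | |].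
  { intros a b a' b' _ _. reflexivity. }
  apply gen_affine_near; [exact positive_slope_subgroup |].
  intros k [-> | ->]; apply stabiliser_affine_near; assumption.
Qed.
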